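(* Let $\bar{\Phi}$, $\bar{\mu}$, $\lambda$ and $R_n$ be as in the context, and let $\delta_0$ be the Dirac mass at the origin of $\bar{\mathbb{K}}$. Then for every $n\in\mathbb{N}$, \[|\bar{\Phi}^n(\delta_0)|\le\frac{\lambda^n}{\bar{\mu}(\{0\})}\,\bar{\mu}(R_n),\] where $|\cdot|$ denotes total mass.
   Context: Let $\beta\in(1,2)$ be an algebraic integer none of whose Galois conjugates has modulus $1$. List all its Galois conjugates (both members of each complex-conjugate pair) as $\beta=\beta_1,\dots,\beta_d,\beta_{d+1},\dots,\beta_{d+s},\beta_{d+s+1}$, where $|\beta_1|,\dots,|\beta_d|>1$, $|\beta_{d+1}|,\dots,|\beta_{d+s}|<1$, and $\beta_{d+s+1}$ is real with $|\beta_{d+s+1}|>1$. For $z\in\mathbb{C}$ let $\mathbb{F}_z=\mathbb{R}$ if $z\in\mathbb{R}$ and $\mathbb{C}$ otherwise; let $\bar{\mathbb{K}}=\prod_{j=1}^{d+s+1}\mathbb{F}_{\beta_j}$, $\bar{\beta}^n=(\beta_1^n,\dots,\beta_{d+s+1}^n)$, and for $i\in\mathbb{Z}$ let $\bar{T}_i(x_1,\dots,x_{d+s+1})=(\beta_1x_1+i,\dots,\beta_{d+s+1}x_{d+s+1}+i)$. Let $\pi_e(x)=(x_1,\dots,x_d)$, $\pi_c(x)=(x_{d+1},\dots,x_{d+s})$, $\pi_{free}(x)=x_{d+s+1}$. For $j\le d$ let $I_{\beta_j}=[-\frac{1}{\beta_j-1},\frac{1}{\beta_j-1}]$ if $\beta_j>1$,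 $I_{\beta_j}=\{x\in\mathbb{R}:|x|\le\frac{2}{|\beta_j|-1}\}$ if $\beta_j<-1$, $I_{\beta_j}=\{z\in\mathbb{C}:|z|\le\frac{2}{|\beta_j|-1}\}$ if $\beta_j\notin\mathbb{R}$; $I=\prod_{j\le d}I_{\beta_j}$ and $S=\{x\in\bar{\mathbb{K}}:\pi_e(x)\in I\}$. Let $\bar{X}=\{\sum_{i=1}^n a_i\bar{\beta}^{n-i}:n\in\mathbb{N},a_i\in\{-1,0,1\}\}\cap S$. For $n\ge1$ and $x\in S$ let $\bar{\mu}_n(\{x\})=\#\{(a,b)\in\{0,1\}^n\times\{0,1\}^n:\sum_{i=1}^n(a_i-b_i)\bar{\beta}^{n-i}=x\}$, with $\bar{\mu}_n$ giving no mass outside $S$. It is known (from earlier work of the authors) that there exist $\lambda>1$ and $f:\bar{X}\to(0,\infty)$ with $\lambda^{-n}\bar{\mu}_n(\{x\})\to f(x)$ for every $x\in\bar{X}$, and that $0<f(x)\le f(0)$; let $\bar{\mu}=\sum_{x\in\bar{X}}f(x)\delta_x$. The operator $\bar{\Phi}$ on measures on $\bar{X}$ is $\bar{\Phi}(\mu)(A)=\mu(\bar{T}_{-1}^{-1}(A))+2\mu(\bar{T}_0^{-1}(A))+\mu(\bar{T}_1^{-1}(A))$ for $A\subset S$, and $\bar{\Phi}(\mu)(A)=\bar{\Phi}(\mu)(A\cap S)$ in general (no mass outside $S$). For $n\ge0$ let $R_n=\{x\in\bar{X}:|\pi_{free}(x)|\le\sum_{i=0}^{n-1}|\beta_{d+s+1}|^i\}$.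 *)

From HB Require Import structures.
From mathcomp Require Import all_boot all_order all_algebra all_field.
From mathcomp Require Import all_classical all_reals all_analysis.
Set Implicit Arguments. Unset Strict Implicit. Unset Printing Implicit Defensive.
Import Order.TTheory GRing.Theory Num.Theory.
Local Open Scope ring_scope.
Local Open Scope classical_set_scope.

(* Points of K-bar: (d+s+1)-tuples of algebraic complex numbers;
   coordinate j is the beta_j-coordinate. *)
Definition pt (N : nat) := {ffun 'I_N -> algC}.

Definition betabar N (c : 'I_N -> algC) (k : nat) : pt N := [ffun j => c j ^+ k].

(* sum_{i=1}^n a_i bar-beta^{n-i}  (0-indexed: a i has exponent n-1-i) *)
Definition digsum N (c : 'I_N -> algC) (n : nat) (a : 'I_n -> int) : pt N :=
  \sum_(i < n) betabar c (n - i.+1) *~ a i.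

Definition Tmap N (c : 'I_N -> algC) (i : int) (x : pt N) : pt N :=
  [ffun j => c j * x j + i%:~R].

Definition inIb (b z : algC) : Prop :=
  if b \is Num.real then
    (if 1 < b then z \is Num.real /\ `|z| <= (b - 1)^-1
     else z \is Num.real /\ `|z| <= 2 / (`|b| - 1))
  else `|z| <= 2 / (`|b| - 1).

(* S = { x : pi_e(x) in I }, pi_e = first d coordinates *)
Definition Sset N (c : 'I_N -> algC) (d : nat) : set (pt N) :=
  [set x | forall j : 'I_N, (j < d)%N -> inIb (c j) (x j)].

Definition Xbar N (c : 'I_N -> algC) (d : nat) : set (pt N) :=
  [set x | (exists (n : nat) (a : 'I_n -> int),
              (forall i, a i \in [:: -1; 0; 1]) /\ x = digsum c a)
           /\ Sset c d x].

Definition mun N (c : 'I_N -> algC) (d n : nat) (x : pt N) : nat :=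
  if `[< Sset c d x >] then
    #|[set ab : {ffun 'I_n -> bool} * {ffun 'I_n -> bool} |
        digsum c (fun i => ((ab.1 i : nat)%:Z - (ab.2 i : nat)%:Z)) == x]|
  else 0%N.

Definition Phi (R : realType) N (c : 'I_N -> algC) (d : nat)
    (mu : set (pt N) -> \bar R) (A : set (pt N)) : \bar R :=
  let B := A `&` Sset c d in
  (mu (Tmap c (-1) @^-1` B) + 2%:E * mu (Tmap c 0 @^-1` B)
   + mu (Tmap c 1 @^-1` B))%E.

Definition deltaO (R : realType) N (A : set (pt N)) : \bar R :=
  (if `[< A 0 >] then 1 else 0)%:E.

Definition mubar (R : realType) N (c : 'I_N -> algC) (d : nat) (f : pt N -> R)
    (A : set (pt N)) : \bar R :=
  (\esum_(x in Xbar c d `&` A) (f x)%:E)%E.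

(* R_n, with free coordinate index = last index d+s *)
Definition Rn (d s : nat) (c : 'I_(d + s).+1 -> algC) (n : nat)
    : set (pt (d + s).+1) :=
  [set x | Xbar c d x /\
     `|x ord_max| <= \sum_(i < n) `|c ord_max| ^+ i].

Definition mass (R : realType) N (mu : set (pt N) -> \bar R) : \bar R := mu setT.

From HB Require Import structures.
From mathcomp Require Import all_boot all_order all_algebra all_field.
From mathcomp Require Import all_classical all_reals all_analysis.
From mathcomp Require Import zify.
Set Implicit Arguments. Unset Strict Implicit. Unset Printing Implicit Defensive.
Import Order.TTheory GRing.Theory Num.Theory numFieldNormedType.Exports.
Local Open Scope ring_scope.
Local Open Scope classical_set_scope.

(* Appending a digit pair (u, v) to (a, b) maps its digit sum x to T_(u - v) x, and the
   four choices of (u, v) give T_(-1), T_0 twice and T_1; hence Phi^n(delta_0)(A) is at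
   most the number N_n(A) of pairs of length n whose digit sum lies in A and S.
   Prefixing a pair of length m with digit sum 0 does not change the digit sum, so
   mu_m({0}) N_n(S) <= sum_(x in F_n) mu_(m+n)({x}), where F_n is the finite set of
   digit sums in S. Dividing by lam^(m+n) and letting m -> oo gives
   f(0) N_n(S) <= lam^n sum_(x in F_n) f(x), and F_n is contained in R_n since
   |x_free| <= sum_(i < n) |beta_free|^i. *)

Lemma card_sum_nat (T : finType) (a : pred T) : #|a| = (\sum_x a x)%N.
Proof. by rewrite -sum1_card big_mkcond. Qed.

Lemma sum_card_fibres (T : finType) (U : eqType) (g : T -> U) (s : seq U) :
  uniq s -> (\sum_(x <- s) #|[pred y | g y == x]| = #|[pred y | g y \in s]|)%N.
Proof.
elim: s => [|x s IHs] /=; first by rewrite big_nil card_sum_nat big1.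
case/andP => x_notin_s s_uniq; rewrite big_cons IHs // !card_sum_nat -big_split /=.
apply: eq_bigr => y _; rewrite in_cons; case: eqP => [->|] //=.
by rewrite (negbTE x_notin_s).
Qed.

Lemma leq_card_inj (T T' : finType) (h : T -> T') (A : {pred T}) (B : {pred T'}) :
  injective h -> {subset A <= [preim h of B]} -> (#|A| <= #|B|)%N.
Proof.
move=> h_inj AB; rewrite -(fintype.card_image h_inj A); apply/subset_leq_card/fintype.subsetP.
by move=> _ /fintype.imageP[x /AB Bhx ->].
Qed.

Definition ffun_cat (T : Type) m k (f : {ffun 'I_m -> T}) (g : {ffun 'I_k -> T})
    : {ffun 'I_(m + k) -> T} :=
  [ffun i : 'I_(m + k) => match fintype.split i with inl j => f j | inr j => g j end].

Lemma ffun_cat_lshift (T : Type) m k (f : {ffun 'I_m -> T}) (g : {ffun 'I_k -> T}) j :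
  ffun_cat f g (lshift k j) = f j.
Proof. by rewrite ffunE (unsplitK (inl j)). Qed.

Lemma ffun_cat_rshift (T : Type) m k (f : {ffun 'I_m -> T}) (g : {ffun 'I_k -> T}) j :
  ffun_cat f g (rshift m j) = g j.
Proof. by rewrite ffunE (unsplitK (inr j)). Qed.

Lemma ffun_cat_inj (T : Type) m k (f f' : {ffun 'I_m -> T}) (g g' : {ffun 'I_k -> T}) :
  ffun_cat f g = ffun_cat f' g' -> f = f' /\ g = g'.
Proof.
move=> e; split; apply/ffunP => j.
  by rewrite -(ffun_cat_lshift f g) -(ffun_cat_lshift f' g') e.
by rewrite -(ffun_cat_rshift f g) -(ffun_cat_rshift f' g') e.
Qed.

Section PairSums.
Variables (K : nat) (c : 'I_K -> algC).

Definition digit_pairs n := ({ffun 'I_n -> bool} * {ffun 'I_n -> bool})%type.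

Definition bool_digit (u v : bool) : int := (u : nat)%:Z - (v : nat)%:Z.

Definition pair_digits n (ab : digit_pairs n) (i : 'I_n) : int := bool_digit (ab.1 i) (ab.2 i).

Definition pair_sum n (ab : digit_pairs n) : pt K := digsum c (pair_digits ab).

Definition pair_cat m k (p : digit_pairs m) (q : digit_pairs k) : digit_pairs (m + k) :=
  (ffun_cat p.1 q.1, ffun_cat p.2 q.2).

Definition digit_pair1 (u v : bool) : digit_pairs 1 := ([ffun=> u], [ffun=> v]).

Lemma pair_cat_inj m k (p p' : digit_pairs m) (q q' : digit_pairs k) :
  pair_cat p q = pair_cat p' q' -> (p, q) = (p', q').
Proof.
by case: p p' q q' => [a b] [a' b'] [e g] [e' g'] [] /ffun_cat_inj[-> ->] /ffun_cat_inj[-> ->].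
Qed.

Lemma digit_pair1_inj u v u' v' : digit_pair1 u v = digit_pair1 u' v' -> (u, v) = (u', v').
Proof. by case=> /ffunP/(_ ord0) + /ffunP/(_ ord0); rewrite !ffunE => -> ->. Qed.

Lemma digsumE n (a : 'I_n -> int) j :
  digsum c a j = \sum_(i < n) c j ^+ (n - i.+1) *~ a i.
Proof. by rewrite sum_ffunE; apply: eq_bigr => i _; rewrite ffunMzE ffunE. Qed.

Lemma pair_sum0 (ab : digit_pairs 0) : pair_sum ab = 0.
Proof. by rewrite /pair_sum /digsum big_ord0. Qed.

Lemma pair_sum_cat m k (p : digit_pairs m) (q : digit_pairs k) j :
  pair_sum (pair_cat p q) j = c j ^+ k * pair_sum p j + pair_sum q j.
Proof.
rewrite /pair_sum !digsumE big_split_ord mulr_sumr; congr (_ + _).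
  apply: eq_bigr => i _; rewrite /pair_digits !ffun_cat_lshift mulrzAr -exprD.
  by congr (_ ^+ _ *~ _); rewrite /=; have := ltn_ord i; lia.
apply: eq_bigr => i _; rewrite /pair_digits !ffun_cat_rshift.
by congr (_ ^+ _ *~ _); rewrite /=; lia.
Qed.

Lemma pair_sum_cat_digit m (p : digit_pairs m) (u v : bool) :
  pair_sum (pair_cat p (digit_pair1 u v)) = Tmap c (bool_digit u v) (pair_sum p).
Proof.
apply/ffunP => j; rewrite pair_sum_cat ffunE expr1 [pair_sum (digit_pair1 _ _) j]digsumE big_ord1.
by rewrite /pair_digits !ffunE subnn expr0.
Qed.

Lemma pair_sum_cat_zero m k (p : digit_pairs m) (q : digit_pairs k) :
  pair_sum p = 0 -> pair_sum (pair_cat p q) = pair_sum q.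
Proof. by move=> p0; apply/ffunP => j; rewrite pair_sum_cat p0 ffunE mulr0 add0r. Qed.

Lemma norm_pair_digits_le n (ab : digit_pairs n) i : `|pair_digits ab i| <= 1.
Proof. by rewrite /pair_digits /bool_digit; case: (ab.1 i); case: (ab.2 i). Qed.

Lemma norm_pair_sum_le n (ab : digit_pairs n) j :
  `|pair_sum ab j| <= \sum_(i < n) `|c j| ^+ i.
Proof.
rewrite digsumE (reindex_inj rev_ord_inj) /=; apply: le_trans (ler_norm_sum _ _ _) _.
apply: ler_sum => i _; have i_le_n := ltnW (ltn_ord i).
rewrite -mulrzr normrM normrX subnSK // subKn //.
by rewrite -[leRHS]mulr1 ler_wpM2l // -intr_norm lerz1 norm_pair_digits_le.
Qed.

Definition count_pairs n (A : set (pt K)) : nat :=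
  #|[pred ab : digit_pairs n | `[< A (pair_sum ab) >]]|.

Lemma le_count_pairs n (A B : set (pt K)) : A `<=` B -> (count_pairs n A <= count_pairs n B)%N.
Proof.
move=> AB; apply/subset_leq_card/fintype.subsetP => ab /asboolP Aab.
exact/asboolP/AB.
Qed.

Lemma count_pairsS n (A : set (pt K)) :
  (count_pairs n (Tmap c (-1) @^-1` A) + 2 * count_pairs n (Tmap c 0 @^-1` A)
   + count_pairs n (Tmap c 1 @^-1` A) <= count_pairs n.+1 A)%N.
Proof.
pose h (x : digit_pairs n * (bool * bool)) := pair_cat x.1 (digit_pair1 x.2.1 x.2.2).
have h_inj : injective h.
  by move=> [p [u v]] [p' [u' v']] /pair_cat_inj/pair_equal_spec[/= -> /digit_pair1_inj[-> ->]].
rewrite -[n.+1]addn1.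
apply: leq_trans (leq_card_inj (A := [pred x | `[< A (pair_sum (h x)) >]]) h_inj _) => //.
rewrite /count_pairs !card_sum_nat big_distrr -!big_split /=.
pose G p u v : nat := `[< A (pair_sum (h (p, (u, v)))) >].
rewrite [leqRHS](eq_bigr (fun x => G x.1 x.2.1 x.2.2)); last by move=> [p [u v]].
rewrite -(pair_bigA _ (fun p uv => G p uv.1 uv.2)); apply/eq_leq/eq_bigr => p _.
rewrite -(pair_bigA _ (G p)) !big_bool /G /h /= !pair_sum_cat_digit.
have [-> -> -> ->] : [/\ bool_digit true true = 0, bool_digit true false = 1,
  bool_digit false true = -1 & bool_digit false false = 0] by [].
lia.
Qed.

Lemma Sset0 d : (forall j : 'I_K, (j < d)%N -> 1 < `|c j|) -> Sset c d 0.
Proof.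
move=> c_gt1 j j_lt_d; have c1 := ltW (c_gt1 j j_lt_d).
rewrite /inIb ffunE normr0; case: ifP => _; [case: ifP => c_gt1' |].
- by rewrite real0 invr_ge0 subr_ge0 ltW.
- by rewrite real0 divr_ge0 // subr_ge0.
- by rewrite divr_ge0 // subr_ge0.
Qed.

Lemma pair_sum_Xbar d n (ab : digit_pairs n) : Sset c d (pair_sum ab) -> Xbar c d (pair_sum ab).
Proof.
split=> //; exists n, (pair_digits ab); split=> // i.
by rewrite /pair_digits /bool_digit; case: (ab.1 i); case: (ab.2 i).
Qed.

Lemma iter_Phi_le_count_pairs (R : realType) d n (A : set (pt K)) : Sset c d 0 ->
  (iter n (Phi c d) (@deltaO R K) A <= (count_pairs n (A `&` Sset c d))%:R%:E)%E.
Proof.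
move=> S0; elim: n A => [|n IHn] A /=.
  rewrite /deltaO; case: asboolP => A0; rewrite lee_fin ?ler0n // ler1n.
  apply/card_gt0P; exists ([ffun=> false], [ffun=> false]).
  by rewrite inE pair_sum0; split.
apply: le_trans (leeD (leeD (IHn _) (lee_wpmul2l _ (IHn _))) (IHn _)) _; first by rewrite lee_fin.
rewrite -EFinM -!EFinD lee_fin -natrM -!natrD ler_nat.
apply: leq_trans (count_pairsS n (A `&` Sset c d)).
by rewrite !leq_add ?leq_mul2l ?le_count_pairs // => x [].
Qed.

Definition pair_sums n (A : set (pt K)) : seq (pt K) :=
  undup [seq pair_sum ab | ab <- enum [pred ab : digit_pairs n | `[< A (pair_sum ab) >]]].

Lemma pair_sumsP n A x :
  x \in pair_sums n A -> exists2 ab : digit_pairs n, A (pair_sum ab) & x = pair_sum ab.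
Proof. by rewrite mem_undup => /mapP[ab]; rewrite mem_enum => /asboolP; exists ab. Qed.

Lemma count_pairs_cat m n (A : set (pt K)) :
  (count_pairs m [set 0%R] * count_pairs n A
   <= \sum_(x <- pair_sums n A) count_pairs (m + n) [set x])%N.
Proof.
have -> : (\sum_(x <- pair_sums n A) count_pairs (m + n) [set x]
           = #|[pred r : digit_pairs (m + n) | pair_sum r \in pair_sums n A]|)%N.
  rewrite -sum_card_fibres ?undup_uniq //; apply: eq_big_seq => x _.
  by apply: eq_card => r; rewrite !inE; apply/asboolP/eqP.
rewrite -cardX; apply: (leq_card_inj (h := fun pq => pair_cat pq.1 pq.2)).
  by move=> [p q] [p' q'] /pair_cat_inj.
move=> [p q] /andP[/asboolP p0 /asboolP Aq]; rewrite !inE /= pair_sum_cat_zero //.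
by rewrite mem_undup; apply: map_f; rewrite mem_enum; apply/asboolP.
Qed.

Lemma mun_count_pairs d n x : Sset c d x -> mun c d n x = count_pairs n [set x].
Proof.
move=> Sx; rewrite /mun asboolT //; apply: eq_card => ab.
by apply/idP/asboolP => [/set_mem/eqP | /eqP/mem_set].
Qed.

Lemma Xbar0 d : Sset c d 0 -> Xbar c d 0.
Proof.
move=> S0; have e := pair_sum0 (([ffun=> false], [ffun=> false]) : digit_pairs 0).
by rewrite -e; apply: pair_sum_Xbar; rewrite e.
Qed.

Lemma pair_sums_Xbar d n x : x \in pair_sums n (Sset c d) -> Xbar c d x.
Proof. by case/pair_sumsP => ab Sab ->; exact: pair_sum_Xbar. Qed.

End PairSums.

Section Renormalization.
Variables (R : realType) (K : nat) (c : 'I_K -> algC) (d : nat).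
Variables (lam : R) (f : pt K -> R).
Hypotheses (lam_gt0 : 0 < lam) (S0 : Sset c d 0).
Hypothesis mun_cvg :
  forall x, Xbar c d x -> (fun m => lam ^- m * (mun c d m x)%:R) @ \oo --> f x.

Lemma mun_cat_le m n :
  (mun c d m 0%R * count_pairs c n (Sset c d)
   <= \sum_(x <- pair_sums c n (Sset c d)) mun c d (m + n) x)%N.
Proof.
rewrite (mun_count_pairs _ S0) (eq_big_seq (fun x => count_pairs c (m + n) [set x])).
  exact: count_pairs_cat.
by move=> x /pair_sumsP[ab Sab ->]; rewrite (mun_count_pairs _ Sab).
Qed.

Lemma count_pairs_le_sum n :
  f 0 * (count_pairs c n (Sset c d))%:R
  <= lam ^+ n * \sum_(x <- pair_sums c n (Sset c d)) f x.
Proof.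
set N := count_pairs c n _; set F := pair_sums c n _.
have cvg_lhs : (fun m => lam ^- m * (mun c d m 0)%:R * N%:R) @ \oo --> f 0 * N%:R.
  exact: cvgM (mun_cvg (Xbar0 S0)) (cvg_cst _).
have cvg_rhs : (fun m => lam ^+ n * \sum_(x <- F) (lam ^- (m + n) * (mun c d (m + n) x)%:R))
    @ \oo --> lam ^+ n * \sum_(x <- F) f x.
  apply: cvgM (cvg_cst _) _; rewrite big_seq; under eq_cvg do rewrite big_seq.
  apply: cvg_big => [|x /pair_sums_Xbar Xx]; first exact: add_continuous.
  by rewrite (cvg_shiftn n (fun m => lam ^- m * (mun c d m x)%:R)); exact: mun_cvg.
apply: (ler_cvg_to cvg_lhs cvg_rhs); apply: nearW => m.
have lamE : lam ^+ n * lam ^- (m + n) = lam ^- m.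
  by rewrite exprD invfM mulrCA mulfV ?mulr1 // expf_neq0 // gt_eqF.
rewrite -big_distrr mulrA lamE -mulrA.
apply: ler_wpM2l; first by rewrite invr_ge0 exprn_ge0 // ltW.
by rewrite -natr_sum -natrM ler_nat mun_cat_le.
Qed.

End Renormalization.

Lemma mubar_set1 (R : realType) K (c : 'I_K -> algC) d (f : pt K -> R) x :
  Xbar c d x -> 0 <= f x -> mubar c d f [set x] = (f x)%:E.
Proof. by move=> Xx fx_ge0; rewrite /mubar setIidr ?esum_set1 ?lee_fin // => y ->. Qed.

Lemma sum_le_mubar (R : realType) K (c : 'I_K -> algC) d (f : pt K -> R)
    (B : set (pt K)) (s : seq (pt K)) :
  uniq s -> [set` s] `<=` Xbar c d `&` B -> ((\sum_(x <- s) f x)%:E <= mubar c d f B)%E.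
Proof.
move=> s_uniq sB; apply: esum_ge; exists [set` s]; first by split; first exact: finite_seq.
by rewrite -fsbig_seq // sumEFin.
Qed.

Theorem lemma4p1 (R : realType) (beta : algC) (d s : nat)
  (c : 'I_(d + s).+1 -> algC) (p : {poly int})
  (* beta is an algebraic integer with minimal polynomial p, whose roots
     (the Galois conjugates of beta) are exactly c 0, ..., c (d+s) *)
  (hp_monic : p \is monic)
  (hp_irr : irreducible_poly (map_poly (intr : int -> rat) p))
  (hp_roots : map_poly (intr : int -> algC) p
              = \prod_(j < (d + s).+1) ('X - (c j)%:P))
  (hc_inj : injective c)
  (hbeta : 1 < beta < 2)
  (hd : (0 < d)%N)
  (hc0 : c ord0 = beta)
  (hexp : forall j : 'I_(d + s).+1, (j < d)%N -> 1 < `|c j|)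
  (hcon : forall j : 'I_(d + s).+1, (d <= j < d + s)%N -> `|c j| < 1)
  (hfree_real : c ord_max \is Num.real)
  (hfree : 1 < `|c ord_max|)
  (* lambda and f from the known limit theorem *)
  (lam : R) (f : pt (d + s).+1 -> R)
  (hlam : 1 < lam)
  (hfpos : forall x, Xbar c d x -> 0 < f x)
  (hfle : forall x, Xbar c d x -> f x <= f 0)
  (hlim : forall x, Xbar c d x ->
     (fun n : nat => lam ^- n * (mun c d n x)%:R) @ \oo --> f x)
  (n : nat) :
  (mass (iter n (Phi c d) (@deltaO R _))
   <= ((lam ^+ n) / fine (mubar c d f [set 0]))%:E * mubar c d f (Rn c n))%E.
Proof.
have S0 : Sset c d 0 := Sset0 hexp.
have lam_gt0 : 0 < lam := lt_trans ltr01 hlam.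
have f0_gt0 : 0 < f 0 := hfpos 0 (Xbar0 S0).
set N := count_pairs c n (Sset c d); set F := pair_sums c n (Sset c d).
have F_Rn : [set` F] `<=` Xbar c d `&` Rn c n.
  move=> x Fx; have Xx := pair_sums_Xbar Fx; do 2 split => //.
  by case/pair_sumsP: Fx => ab _ ->; exact: norm_pair_sum_le.
have mass_le : (mass (iter n (Phi c d) (@deltaO R _)) <= N%:R%:E)%E.
  rewrite /mass; apply: le_trans (iter_Phi_le_count_pairs R n setT S0) _.
  by rewrite lee_fin ler_nat le_count_pairs // => x [].
rewrite (mubar_set1 (Xbar0 S0) (ltW f0_gt0)) /=; apply: le_trans mass_le _.
apply: le_trans (lee_wpmul2l _ (sum_le_mubar f (undup_uniq _) F_Rn)); last first.
  by rewrite lee_fin divr_ge0 ?exprn_ge0 // ltW.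
rewrite lee_fin mulrAC ler_pdivlMr // mulrC.
exact: (count_pairs_le_sum lam_gt0 S0 hlim).
Qed.
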